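(* Let $\Sigma\subset\mathbb P^4$ be a smooth rational normal cubic scroll. Then there exist lines $\ell\subset\mathbb P^4$ with $\ell\cap\Sigma=\emptyset$ such that the branch curve of the projection $\pi:\Sigma\to\mathbb P^2$ from $\ell$ is the union of an irreducible cuspidal cubic and the tangent line to it at its unique flex.
   Context: The projection from a line disjoint from $\Sigma$ is a finite degree $3$ morphism $\Sigma\to\mathbb P^2$; its branch curve is its branch divisor. *)

From HB Require Import structures.
From mathcomp Require Import all_boot all_order all_algebra.
From mathcomp Require Import mpoly.
Set Implicit Arguments. Unset Strict Implicit. Unset Printing Implicit Defensive.
Import Order.TTheory GRing.Theory.
Local Open Scope ring_scope.

Section Defs.
Variable K : fieldType.

(* Points of P^n are nonzero row vectors of K^(n+1), up to nonzero scalars.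
   Subsets of P^n are represented by cones (predicates on vectors). *)

Definition std_scroll (x : 'rV[K]_5) : Prop :=
  exists s t u v : K, (s != 0 \/ t != 0) /\ (u != 0 \/ v != 0) /\
    x = \row_(i < 5) [:: s * u; t * u; s ^+ 2 * v; s * t * v; t ^+ 2 * v]`_i.

Definition smooth_cubic_scroll (S : 'rV[K]_5 -> Prop) : Prop :=
  exists A : 'M[K]_5, A \in unitmx /\ forall x, S x <-> std_scroll (x *m A).

(** A line of P^4 is the row space of a rank-2 matrix L : 'M_(2,5). *)
Definition is_line (L : 'M[K]_(2,5)) : Prop := \rank L = 2%N.

Definition line_disjoint (L : 'M[K]_(2,5)) (S : 'rV[K]_5 -> Prop) : Prop :=
  forall x : 'rV[K]_5, x != 0 -> (x <= L)%MS -> ~ S x.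

(** P : 'M_(5,3) represents a projection P^4 --> P^2 from the line L:
    x |-> x *m P, with kernel exactly the 2-dimensional space L. *)
Definition projection_from (L : 'M[K]_(2,5)) (P : 'M[K]_(5,3)) : Prop :=
  (kermx P == L)%MS.

(** Branch locus of pi = P restricted to S (a degree-3 finite map): the points
    q of P^2 over which the fibre of pi has fewer than 3 distinct points.
    (Fibre points are normalised by x *m P = q, so distinct vectors are
    distinct points of P^4.) *)
Definition branch_point (S : 'rV[K]_5 -> Prop) (P : 'M[K]_(5,3))
    (q : 'rV[K]_3) : Prop :=
  q != 0 /\
  ~ (exists x1 x2 x3 : 'rV[K]_5,
        [/\ S x1, S x2 & S x3] /\
        [/\ x1 *m P = q, x2 *m P = q & x3 *m P = q] /\
        [/\ x1 != x2, x1 != x3 & x2 != x3]).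

Definition ev (F : {mpoly K[3]}) (q : 'rV[K]_3) : K := meval (fun i => q 0 i) F.

Definition grad (F : {mpoly K[3]}) (p : 'rV[K]_3) : 'rV[K]_3 :=
  \row_i ev (F^`M(i)) p.

Definition hessian (F : {mpoly K[3]}) (p : 'rV[K]_3) : 'M[K]_3 :=
  \matrix_(i, j) ev ((F^`M(i))^`M(j)) p.

Definition dot3 (u v : 'rV[K]_3) : K := (u *m v^T) 0 0.

Definition irreducible_mpoly (F : {mpoly K[3]}) : Prop :=
  (1 < msize F)%N /\
  forall G H : {mpoly K[3]}, F = G * H -> (msize G <= 1)%N \/ (msize H <= 1)%N.

Definition singular_point (F : {mpoly K[3]}) (p : 'rV[K]_3) : Prop :=
  p != 0 /\ ev F p = 0 /\ grad F p = 0.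

(** A cusp of a plane cubic: a double point with a single (double) tangent,
    i.e. the tangent cone (the Hessian quadratic form) has rank 1. *)
Definition cusp (F : {mpoly K[3]}) (p : 'rV[K]_3) : Prop :=
  singular_point F p /\ \rank (hessian F p) = 1%N.

Definition cuspidal_cubic (F : {mpoly K[3]}) : Prop :=
  F \is 3.-homog /\ irreducible_mpoly F /\ exists p, cusp F p.

(** A flex: a smooth point p of F = 0 whose tangent line { q | grad F p . q = 0 }
    meets the curve at p with multiplicity >= 3, i.e. F(p + t v) = O(t^3)
    for every v on the tangent line. *)
Definition flex (F : {mpoly K[3]}) (p : 'rV[K]_3) : Prop :=
  p != 0 /\ ev F p = 0 /\ grad F p != 0 /\
  forall v : 'rV[K]_3, dot3 (grad F p) v = 0 -> dot3 (v *m hessian F p) v = 0.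

End Defs.

From HB Require Import structures.
From mathcomp Require Import all_boot all_order all_algebra.
From mathcomp Require Import mpoly.
From mathcomp Require Import ring zify.
Import GRing.Theory.
Local Open Scope ring_scope.
Set Implicit Arguments. Unset Strict Implicit. Unset Printing Implicit Defensive.

(* After a projective change of coordinates the scroll is S(1,2), the set of
   points u (s, t, 0, 0, 0) + v (0, 0, s^2, s t, t^2), and we project it from the
   line spanned by e3 and e1 - e2, that is Y |-> (-Y4 : Y1 + Y2 : -Y0).  Over
   (x : y : z) with x <> 0 the fibre consists of the points with t = 1 and
   x s^3 + y s + z = 0, whereas over the line x = 0 it has at most two points.
   The branch curve is therefore the discriminant cubic 4 y^3 + 27 x z^2 = 0,
   which has a cusp at (1 : 0 : 0), together with the line x = 0, its tangent at
   its only flex (0 : 0 : 1). *)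

Definition cubic_disc (K : nzRingType) (x y z : K) : K := 4 * y ^+ 3 + 27 * x * z ^+ 2.

Lemma pchar0_natr_neq0 (K : fieldType) (hK : [pchar K] =i pred0) (n : nat) :
  (n != 0)%N -> n%:R != 0 :> K.
Proof. by move=> hn; rewrite (pcharf0P K).1. Qed.

Lemma cubic_disc_roots_neq0 (K : fieldType) (x y z a b c : K) :
  x != 0 -> a != b -> a != c -> b != c ->
  x * a ^+ 3 + y * a + z = 0 -> x * b ^+ 3 + y * b + z = 0 ->
  x * c ^+ 3 + y * c + z = 0 -> cubic_disc x y z != 0.
Proof.
move=> xn0 ab ac bc ha hb hc.
have eab : x * (a ^+ 2 + a * b + b ^+ 2) + y = 0.
  apply: (mulfI (_ : a - b != 0)); first by rewrite subr_eq0.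
  by rewrite mulr0 -[0](subrr 0) -{1}ha -hb; ring.
have eac : x * (a ^+ 2 + a * c + c ^+ 2) + y = 0.
  apply: (mulfI (_ : a - c != 0)); first by rewrite subr_eq0.
  by rewrite mulr0 -[0](subrr 0) -{1}ha -hc; ring.
have sum_roots : a + b + c = 0.
  apply: (mulfI (_ : x * (b - c) != 0)); first by rewrite mulf_neq0 // subr_eq0.
  by rewrite mulr0 -[0](subrr 0) -{1}eab -eac; ring.
have -> : cubic_disc x y z = - (x ^+ 3 * ((a - b) * (a - c) * (b - c)) ^+ 2).
  have -> : c = - a - b by rewrite -[c]subr0 -sum_roots; ring.
  have -> : z = - (x * a ^+ 3) - y * a by rewrite -[z]subr0 -ha; ring.
  have -> : y = - (x * (a ^+ 2 + a * b + b ^+ 2)) by rewrite -[y]subr0 -eab; ring.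
  by rewrite /cubic_disc; ring.
by rewrite oppr_eq0 mulf_neq0 ?expf_neq0 // !mulf_neq0 // subr_eq0.
Qed.

Lemma closed_sqrt (K : closedFieldType) (d : K) : exists w : K, w ^+ 2 = d.
Proof.
have [w] := @solve_monicpoly K 2 (fun i => [:: d; 0]`_i) isT.
by rewrite !big_ord_recl big_ord0 /= => hw; exists w; rewrite hw /bump /=; ring.
Qed.

Lemma closed_cubic_root (K : closedFieldType) (x y z : K) :
  x != 0 -> exists r, x * r ^+ 3 + y * r + z = 0.
Proof.
move=> xn0; have [r] := @solve_monicpoly K 3 (fun i => [:: - (z / x); - (y / x); 0]`_i) isT.
rewrite !big_ord_recl big_ord0 /= => hr; exists r.
by rewrite hr /bump /=; field.
Qed.

Lemma cubic_three_roots (K : closedFieldType) (hK : [pchar K] =i pred0) (x y z : K) :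
  x != 0 -> cubic_disc x y z != 0 ->
  exists a b c, [/\ a != b, a != c & b != c] /\
    [/\ x * a ^+ 3 + y * a + z = 0, x * b ^+ 3 + y * b + z = 0
      & x * c ^+ 3 + y * c + z = 0].
Proof.
move=> xn0 hD; have [r1 root1] := closed_cubic_root y z xn0.
have hz : z = - (x * r1 ^+ 3) - y * r1 by rewrite -[z]subr0 -root1; ring.
pose Q r := x * r ^+ 2 + x * r1 * r + x * r1 ^+ 2 + y.
have cubicE r : x * r ^+ 3 + y * r + z = (r - r1) * Q r by rewrite hz /Q; ring.
have discE : cubic_disc x y z = Q r1 ^+ 2 * (3 * x * r1 ^+ 2 + 4 * y).
  by rewrite /cubic_disc hz /Q; ring.
have Qr1 : Q r1 != 0.
  by apply: contra hD => /eqP Q0; rewrite discE Q0 expr0n mul0r.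
pose d := - (x * (3 * x * r1 ^+ 2 + 4 * y)).
have dn0 : d != 0.
  rewrite oppr_eq0 mulf_neq0 //.
  by apply: contra hD => /eqP h; rewrite discE h mulr0.
have [w hw] := closed_sqrt d.
have wn0 : w != 0 by apply: contra dn0 => /eqP w0; rewrite -hw w0 expr0n.
have n2 : (2 : K) != 0 by apply: pchar0_natr_neq0.
pose r2 := (- (x * r1) + w) / (2 * x).
pose r3 := (- (x * r1) - w) / (2 * x).
have [Qr2 Qr3] : Q r2 = 0 /\ Q r3 = 0.
  have n4 : (4 : K) != 0 by apply: pchar0_natr_neq0.
  have QE r : Q r = ((2 * x * r + x * r1) ^+ 2 - w ^+ 2) / (4 * x).
    by rewrite hw /Q /d; field; rewrite xn0 n4.
  by rewrite !QE /r2 /r3; split; field; rewrite xn0 n2 n4.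
exists r1, r2, r3; split; first split.
- by apply: contra Qr1 => /eqP ->; rewrite Qr2.
- by apply: contra Qr1 => /eqP ->; rewrite Qr3.
- apply: contra wn0 => /eqP r23; apply/eqP.
  have -> : w = x * (r2 - r3) by rewrite /r2 /r3; field; rewrite xn0 n2.
  by rewrite r23 subrr mulr0.
by split => //; rewrite cubicE ?Qr2 ?Qr3 mulr0.
Qed.

Definition j0 : 'I_5 := @Ordinal 5 0 isT.
Definition j1 : 'I_5 := @Ordinal 5 1 isT.
Definition j2 : 'I_5 := @Ordinal 5 2 isT.
Definition j3 : 'I_5 := @Ordinal 5 3 isT.
Definition j4 : 'I_5 := @Ordinal 5 4 isT.

Definition i0 : 'I_3 := @Ordinal 3 0 isT.
Definition i1 : 'I_3 := @Ordinal 3 1 isT.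
Definition i2 : 'I_3 := @Ordinal 3 2 isT.

Lemma ord2P (j : 'I_2) : j = 0 \/ j = 1.
Proof. by case: j => [[|[|//]] hj]; [left|right]; apply: val_inj. Qed.

Lemma ord3P (j : 'I_3) : j = i0 \/ j = i1 \/ j = i2.
Proof. by case: j => [[|[|[|//]]] hj]; [left|right; left|right; right]; apply: val_inj. Qed.

Lemma ord5P (j : 'I_5) : j = j0 \/ j = j1 \/ j = j2 \/ j = j3 \/ j = j4.
Proof.
case: j => [[|[|[|[|[|//]]]]] hj];
  [left|right; left|do 2 right; left|do 3 right; left|do 4 right]; exact: val_inj.
Qed.

Lemma sum2 (R : nmodType) (f : 'I_2 -> R) : \sum_(i < 2) f i = f 0 + f 1.
Proof. by rewrite !big_ord_recl big_ord0 addr0; congr (_ + _); congr f; apply: val_inj. Qed.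

Lemma sum3 (R : nmodType) (f : 'I_3 -> R) : \sum_(i < 3) f i = f i0 + f i1 + f i2.
Proof.
rewrite !big_ord_recl big_ord0 addr0 !addrA.
by congr (_ + _ + _); congr f; apply: val_inj.
Qed.

Lemma sum5 (R : nmodType) (f : 'I_5 -> R) :
  \sum_(i < 5) f i = f j0 + f j1 + f j2 + f j3 + f j4.
Proof.
rewrite !big_ord_recl big_ord0 addr0 !addrA.
by congr (_ + _ + _ + _ + _); congr f; apply: val_inj.
Qed.

Definition row3 (K : nzRingType) (a b c : K) : 'rV[K]_3 := \row_(i < 3) [:: a; b; c]`_i.

Definition vec5 (K : nzRingType) (a b c d e : K) : 'rV[K]_5 :=
  \row_(i < 5) [:: a; b; c; d; e]`_i.

Lemma row3_eta (K : nzRingType) (w : 'rV[K]_3) : w = row3 (w 0 i0) (w 0 i1) (w 0 i2).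
Proof.
by apply/matrixP => i j; rewrite ord1; case: (ord3P j) => [->|[->|->]]; rewrite mxE.
Qed.

Lemma row3_eq (K : nzRingType) (a b c a' b' c' : K) :
  row3 a b c = row3 a' b' c' <-> [/\ a = a', b = b' & c = c'].
Proof.
split=> [e|[-> -> ->]] //.
have ei j := congr1 (fun w : 'rV[K]_3 => w 0 j) e.
by have := ei i0; have := ei i1; have := ei i2; rewrite !mxE.
Qed.

Lemma vec5_eq (K : nzRingType) (a b c d e a' b' c' d' e' : K) :
  vec5 a b c d e = vec5 a' b' c' d' e' ->
  [/\ a = a', b = b', c = c', d = d' & e = e'].
Proof.
move=> h; have hj j := congr1 (fun Y : 'rV[K]_5 => Y 0 j) h.
by have := hj j0; have := hj j1; have := hj j2; have := hj j3; have := hj j4; rewrite !mxE.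
Qed.

Section StandardProjection.
Variable K : fieldType.

Definition std_proj : 'M[K]_(5,3) :=
  \matrix_(i, j) [:: - (i == j4)%:R; (i == j1)%:R + (i == j2)%:R; - (i == j0)%:R]`_j.

Definition std_section : 'M[K]_(3,5) :=
  \matrix_(i, j) [:: - (j == j4)%:R; (j == j1)%:R; - (j == j0)%:R]`_i.

Definition std_line : 'M[K]_(2,5) :=
  \matrix_(i, j) [:: (j == j3)%:R; (j == j1)%:R - (j == j2)%:R]`_i.

Lemma std_projE (Y : 'rV[K]_5) :
  Y *m std_proj = row3 (- Y 0 j4) (Y 0 j1 + Y 0 j2) (- Y 0 j0).
Proof.
apply/matrixP => i j; rewrite ord1 !mxE sum5 !mxE.
by case: (ord3P j) => [->|[->|->]] /=; ring.
Qed.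

Lemma std_sectionE (w : 'rV[K]_3) :
  w *m std_section = vec5 (- w 0 i2) (w 0 i1) 0 0 (- w 0 i0).
Proof.
apply/matrixP => i j; rewrite ord1 !mxE sum3 !mxE.
by case: (ord5P j) => [->|[->|[->|[->|->]]]] /=; ring.
Qed.

Lemma std_lineE (D : 'rV[K]_2) : D *m std_line = vec5 0 (D 0 1) (- D 0 1) (D 0 0) 0.
Proof.
apply/matrixP => i j; rewrite ord1 !mxE sum2 !mxE.
by case: (ord5P j) => [->|[->|[->|[->|->]]]] /=; ring.
Qed.

Lemma std_section_proj (w : 'rV[K]_3) : w *m std_section *m std_proj = w.
Proof. by rewrite std_sectionE std_projE [RHS]row3_eta !mxE /=; congr row3; ring. Qed.

Lemma std_line_proj (D : 'rV[K]_2) : D *m std_line *m std_proj = 0.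
Proof.
rewrite std_lineE std_projE !mxE /=; apply/matrixP => i j.
by rewrite ord1 !mxE; case: (ord3P j) => [->|[->|->]] /=; ring.
Qed.

Lemma sub_std_line (Y : 'rV[K]_5) : (Y - Y *m std_proj *m std_section <= std_line)%MS.
Proof.
apply/submxP; exists (\row_(i < 2) [:: Y 0 j3; - Y 0 j2]`_i).
rewrite std_lineE std_projE std_sectionE !mxE /=.
by apply/matrixP => i j; rewrite ord1 !mxE; case: (ord5P j) => [->|[->|[->|[->|->]]]] /=; ring.
Qed.

Lemma rank_std_line : \rank std_line = 2%N.
Proof.
pose C : 'M[K]_(5,2) := \matrix_(i, j) (if j == 0 then (i == j3)%:R else (i == j1)%:R).
have hC : std_line *m C = 1%:M.
  apply/matrixP => i j; rewrite !mxE sum5 !mxE.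
  by case: (ord2P i) => ->; case: (ord2P j) => -> /=; ring.
apply/eqP; rewrite eqn_leq rank_leq_row /=.
by rewrite -{1}(mxrank1 K 2) -hC mxrankM_maxl.
Qed.

Lemma std_scroll_std_line (D : 'rV[K]_2) : ~ std_scroll (D *m std_line).
Proof.
rewrite std_lineE => -[s [t [u [v [hst [huv /esym he]]]]]].
have [e0 e1 e2 _ e4] := vec5_eq he.
have hsum : t * u + s ^+ 2 * v = 0 by rewrite e1 e2; ring.
suff [u0 v0] : u = 0 /\ v = 0 by case: huv => /negP; rewrite ?u0 ?v0 eqxx.
have [s0|sn0] := eqVneq s 0.
  have tn0 : t != 0 by case: hst => // /negP; rewrite s0 eqxx.
  have v0 : v = 0 by move/eqP: e4; rewrite mulf_eq0 expf_eq0 (negbTE tn0) => /eqP.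
  by move/eqP: hsum; rewrite s0 v0 mulr0 addr0 mulf_eq0 (negbTE tn0) => /eqP.
have u0 : u = 0 by move/eqP: e0; rewrite mulf_eq0 (negbTE sn0) => /eqP.
by move/eqP: hsum; rewrite u0 mulr0 add0r mulf_eq0 expf_eq0 (negbTE sn0) => /eqP.
Qed.

End StandardProjection.

Section ProjectionFromKernel.
Variables (K : fieldType) (n m k : nat).
Variables (pr : 'M[K]_(n, m)) (sec : 'M[K]_(m, n)) (L : 'M[K]_(k, n)).
Hypothesis sec_pr : forall w : 'rV[K]_m, w *m sec *m pr = w.
Hypothesis L_pr : forall D : 'rV[K]_k, D *m L *m pr = 0.
Hypothesis sub_L : forall Y : 'rV[K]_n, (Y - Y *m pr *m sec <= L)%MS.
Variable R : 'M[K]_(n, m).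
Hypothesis kerR : (kermx R == L)%MS.

Lemma mul_kermx_factor (Y : 'rV[K]_n) : Y *m R = Y *m pr *m (sec *m R).
Proof.
have : (Y - Y *m pr *m sec) *m R == 0 by rewrite -sub_kermx (eqmxP kerR) sub_L.
by rewrite mulmxBl subr_eq0 !mulmxA => /eqP.
Qed.

Lemma kermx_section_unit : sec *m R \in unitmx.
Proof.
rewrite -row_free_unit; apply: inj_row_free => w /eqP.
rewrite mulmxA -sub_kermx (eqmxP kerR) => /submxP [D hD].
by rewrite -[w]sec_pr hD L_pr.
Qed.

End ProjectionFromKernel.

Lemma std_section_mul_unit (K : fieldType) (R : 'M[K]_(5,3)) :
  (kermx R == std_line K)%MS -> std_section K *m R \in unitmx.
Proof. exact: (kermx_section_unit (@std_section_proj K) (@std_line_proj K)). Qed.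

Lemma std_proj_factor (K : fieldType) (R : 'M[K]_(5,3)) (Y : 'rV[K]_5) :
  (kermx R == std_line K)%MS -> Y *m R = Y *m std_proj K *m (std_section K *m R).
Proof. by move=> kerR; rewrite (mul_kermx_factor (@sub_std_line K) kerR). Qed.

Lemma kermx_conj (K : fieldType) (n m k : nat) (A : 'M[K]_n) (L : 'M[K]_(k, n))
    (P : 'M[K]_(n, m)) :
  A \in unitmx -> (kermx P == L *m invmx A)%MS -> (kermx (invmx A *m P) == L)%MS.
Proof.
move=> Au hP.
have subE p (u : 'M[K]_(p, n)) : (u <= kermx (invmx A *m P))%MS = (u <= L)%MS.
  rewrite sub_kermx mulmxA -sub_kermx (eqmxP hP).
  by rewrite submxMfree // row_free_unit unitmx_inv.
by apply/andP; split; [rewrite -subE | rewrite subE].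
Qed.

Definition three_distinct (T : eqType) (Q : T -> Prop) : Prop :=
  exists x1 x2 x3, [/\ Q x1, Q x2 & Q x3] /\ [/\ x1 != x2, x1 != x3 & x2 != x3].

Lemma three_distinct_bij (T U : eqType) (f : T -> U) (g : U -> T)
    (Q : T -> Prop) (Q' : U -> Prop) :
  cancel f g -> cancel g f -> (forall x, Q x <-> Q' (f x)) ->
  three_distinct Q <-> three_distinct Q'.
Proof.
move=> fK gK hQ.
have hQ' y : Q' y <-> Q (g y) by rewrite hQ gK.
split=> -[x1 [x2 [x3 [[q1 q2 q3] [d12 d13 d23]]]]].
  exists (f x1), (f x2), (f x3); rewrite !(inj_eq (can_inj fK)).
  by split; [split; apply/hQ |].
exists (g x1), (g x2), (g x3); rewrite !(inj_eq (can_inj gK)).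
by split; [split; apply/hQ' |].
Qed.

Section StandardFibre.
Variable K : fieldType.

Definition std_fibre (w : 'rV[K]_3) (Y : 'rV[K]_5) : Prop :=
  std_scroll Y /\ Y *m std_proj K = w.

(** The point of [S(1,2)] with parameters [(s, t) = (s, 1)], [u = y + x s^2], [v = -x]. *)
Definition fibre_point (x y s : K) : 'rV[K]_5 :=
  vec5 (s * (y + x * s ^+ 2)) (y + x * s ^+ 2) (- (x * s ^+ 2)) (- (x * s)) (- x).

Lemma std_fibreE x y z (Y : 'rV[K]_5) :
  std_fibre (row3 x y z) Y <->
  std_scroll Y /\ [/\ - Y 0 j4 = x, Y 0 j1 + Y 0 j2 = y & - Y 0 j0 = z].
Proof. by rewrite /std_fibre std_projE row3_eq. Qed.

Lemma std_fibre_x0 y z (Y : 'rV[K]_5) : std_fibre (row3 0 y z) Y ->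
  Y = vec5 (- z) y 0 0 0 \/ Y = vec5 (- z) 0 y 0 0.
Proof.
case/std_fibreE=> -[s [t [u [v [_ [_ ->]]]]]].
rewrite !mxE /= => -[/eqP h4 h12 h0].
move: h4; rewrite oppr_eq0 mulf_eq0 expf_eq0 /= => /orP [/eqP t0|/eqP v0].
  by right; rewrite -h0 -h12 t0; congr vec5; ring.
by left; rewrite -h0 -h12 v0; congr vec5; ring.
Qed.

Lemma std_fibre_cubic x y z (Y : 'rV[K]_5) : x != 0 -> std_fibre (row3 x y z) Y ->
  exists s, Y = fibre_point x y s /\ x * s ^+ 3 + y * s + z = 0.
Proof.
move=> xn0 /std_fibreE [[s [t [u [v [_ [_ ->]]]]]]].
rewrite !mxE /= => -[h4 h12 h0].
have tn0 : t != 0 by apply: contra xn0 => /eqP t0; rewrite -h4 t0; apply/eqP; ring.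
exists (s / t); split; last by rewrite -h4 -h12 -h0; field.
by rewrite /fibre_point -h4 -h12; congr vec5; field.
Qed.

Lemma fibre_point_std_fibre x y z s : x != 0 ->
  x * s ^+ 3 + y * s + z = 0 -> std_fibre (row3 x y z) (fibre_point x y s).
Proof.
move=> xn0 hs; apply/std_fibreE; split.
  exists s, 1, (y + x * s ^+ 2), (- x); split; first by right; exact: oner_neq0.
  split; first by right; rewrite oppr_eq0.
  by rewrite /fibre_point; congr vec5; ring.
rewrite !mxE /=; split; try ring.
by rewrite -[z]subr0 -hs; ring.
Qed.

Lemma fibre_point_inj x (y : K) : x != 0 -> injective (fibre_point x y).
Proof.
move=> xn0 s1 s2 /vec5_eq [_ _ _ /eqP + _].
by rewrite eqr_opp => /eqP /(mulfI xn0).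
Qed.

End StandardFibre.

Lemma std_fibre_three_points (K : closedFieldType) (hK : [pchar K] =i pred0)
    (x y z : K) :
  three_distinct (std_fibre (row3 x y z)) <-> x != 0 /\ cubic_disc x y z != 0.
Proof.
split=> [[Y1 [Y2 [Y3 [[f1 f2 f3] [d12 d13 d23]]]]]|[xn0 hD]].
  have [x0|xn0] := eqVneq x 0.
    rewrite x0 in f1 f2 f3; move: d12 d13 d23.
    case: (std_fibre_x0 f1) => ->; case: (std_fibre_x0 f2) => ->;
      by case: (std_fibre_x0 f3) => ->; rewrite ?eqxx.
  split=> //; move: d12 d13 d23.
  have [a [-> ha]] := std_fibre_cubic xn0 f1.
  have [b [-> hb]] := std_fibre_cubic xn0 f2.
  have [c [-> hc]] := std_fibre_cubic xn0 f3.
  rewrite !(inj_eq (fibre_point_inj (y := y) xn0)) => dab dac dbc.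
  exact: (cubic_disc_roots_neq0 xn0 dab dac dbc ha hb hc).
have [a [b [c [[dab dac dbc] [ha hb hc]]]]] := cubic_three_roots hK xn0 hD.
exists (fibre_point x y a), (fibre_point x y b), (fibre_point x y c).
rewrite !(inj_eq (fibre_point_inj (y := y) xn0)).
by split; split=> //; apply: fibre_point_std_fibre.
Qed.

Lemma mderivX1 (R : nzRingType) (n : nat) (i k : 'I_n) :
  ('X_k : {mpoly R[n]})^`M(i) = ((k == i)%:R)%:MP.
Proof.
rewrite mderivX mnm1E; case: eqP => [->|_]; last by rewrite scale0r.
have -> : (U_(i) - U_(i))%MM = 0%MM by apply/mnmP => j; rewrite mnmBE mnm0E subnn.
by rewrite mpolyX0 scale1r.
Qed.

Lemma mdeg_cases (n : nat) (m : 'X_{1..n}) :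
  m = 0%MM \/ (exists j, m = U_(j)%MM) \/ (2 <= mdeg m)%N.
Proof.
case: (ltngtP (mdeg m) 1) => h.
- by left; apply/eqP; rewrite -mdeg_eq0; move: h; case: (mdeg m).
- by right; right.
- by right; left; move/eqP/mdeg1P: h => [j /eqP ->]; exists j.
Qed.

Lemma msize_le2_affine (R : nzRingType) (n : nat) (G : {mpoly R[n]}) :
  (msize G <= 2)%N -> G = (G@_0%MM)%:MP + \sum_(i < n) G@_U_(i) *: 'X_i.
Proof.
move=> hs; apply/mpolyP => m; rewrite mcoeffD mcoeffC raddf_sum /=.
under eq_bigr => i _ do rewrite mcoeffZ mcoeffX.
case: (mdeg_cases m) => [->|[[j ->]|m2]].
- by rewrite eqxx mulr1 big1 ?addr0 // => i _; rewrite mnm1_eq0 mulr0.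
- rewrite mnm1_eq0 mulr0 add0r (bigD1 j) //= eqxx mulr1 big1 ?addr0 //.
  by move=> i /negbTE ij; rewrite eq_mnm1 ij mulr0.
- rewrite memN_msupp_eq0; last by apply: msize_mdeg_ge; apply: leq_trans hs m2.
  have -> : (m == 0%MM) = false by apply/negbTE/eqP => m0; move: m2; rewrite m0 mdeg0.
  rewrite mulr0 add0r big1 // => i _.
  have -> : (U_(i)%MM == m) = false by apply/negbTE/eqP => mi; move: m2; rewrite -mi mdeg1.
  by rewrite mulr0.
Qed.

Lemma hyperplane_off_cusp_curve (K : fieldType) (hK : [pchar K] =i pred0)
    (c h0 h1 h2 : K) :
  ~~ [&& h0 == 0, h1 == 0 & h2 == 0] ->
  exists a b d, c + a * h0 + b * h1 + d * h2 = 0 /\ cubic_disc a b d != 0.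
Proof.
have n4 : (4 : K) != 0 by apply: pchar0_natr_neq0.
have n27 : (27 : K) != 0 by apply: pchar0_natr_neq0.
have [-> /=|h0n0 _] := eqVneq h0 0; last first.
  exists (- (c + h1) / h0), 1, 0; split; first by field; rewrite h0n0.
  by rewrite /cubic_disc expr0n /= !mulr0 addr0 expr1n mulr1.
have [-> /=|h1n0 _] := eqVneq h1 0; last first.
  pose b := - (c + h2) / h1.
  exists ((1 - 4 * b ^+ 3) / 27), b, 1; split; first by rewrite /b; field; rewrite h1n0 ?n27.
  have -> : cubic_disc ((1 - 4 * b ^+ 3) / 27) b 1 = 1.
    by rewrite /cubic_disc; field; rewrite n27.
  exact: oner_neq0.
move=> h2n0; exists 0, 1, (- c / h2); split; first by field; rewrite h2n0.
by rewrite /cubic_disc mulr0 mul0r addr0 expr1n mulr1.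
Qed.

Section CuspidalCubic.
Variables (K : fieldType) (N : 'M[K]_3).
Hypothesis N_unit : N \in unitmx.

Definition lin_form (j : 'I_3) : {mpoly K[3]} := \sum_(i < 3) N i j *: 'X_i.

Definition lin_coord (q : 'rV[K]_3) (j : 'I_3) : K := (q *m N) 0 j.

Definition cusp_cubic : {mpoly K[3]} :=
  4 *: (lin_form i1 * lin_form i1 * lin_form i1)
  + 27 *: (lin_form i0 * (lin_form i2 * lin_form i2)).

Definition cusp_cubic_flex : 'rV[K]_3 := row3 0 0 1 *m invmx N.

Definition cusp_cubic_cusp : 'rV[K]_3 := row3 1 0 0 *m invmx N.

Lemma lin_coordE (q : 'rV[K]_3) j :
  lin_coord q j = q 0 i0 * N i0 j + q 0 i1 * N i1 j + q 0 i2 * N i2 j.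
Proof. by rewrite /lin_coord mxE sum3. Qed.

Lemma lin_coord_invmx (w : 'rV[K]_3) j : lin_coord (w *m invmx N) j = w 0 j.
Proof. by rewrite /lin_coord mulmxKV. Qed.

Lemma lin_coord_eta (q : 'rV[K]_3) :
  q = row3 (lin_coord q i0) (lin_coord q i1) (lin_coord q i2) *m invmx N.
Proof. by rewrite -row3_eta mulmxK. Qed.

Lemma ev_lin_form (q : 'rV[K]_3) j : meval (fun i => q 0 i) (lin_form j) = lin_coord q j.
Proof.
rewrite /lin_form /lin_coord raddf_sum mxE; apply: eq_bigr => i _.
by rewrite /= mevalZ mevalXU mulrC.
Qed.

Lemma mderiv_lin_form i j : (lin_form j)^`M(i) = (N i j)%:MP.
Proof.
rewrite /lin_form raddf_sum (bigD1 i) //= big1 ?addr0.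
  by rewrite mderivZ mderivX1 eqxx; apply/mpolyP => m; rewrite mcoeffZ !mcoeffC mul1r.
by move=> k /negbTE kn; rewrite mderivZ mderivX1 kn scaler0.
Qed.

Lemma ev_cusp_cubic (q : 'rV[K]_3) :
  ev cusp_cubic q = cubic_disc (lin_coord q i0) (lin_coord q i1) (lin_coord q i2).
Proof.
by rewrite /ev /cusp_cubic !mevalD !mevalZ !mevalM /= !ev_lin_form /cubic_disc; ring.
Qed.

Lemma ev_mderiv_cusp_cubic (q : 'rV[K]_3) i :
  ev cusp_cubic^`M(i) q = 12 * lin_coord q i1 ^+ 2 * N i i1
    + 27 * lin_coord q i2 ^+ 2 * N i i0 + 54 * lin_coord q i0 * lin_coord q i2 * N i i2.
Proof.
rewrite /ev /cusp_cubic !mderivD !mderivZ !mderivM !mderiv_lin_form.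
rewrite !(mevalD, mevalZ, mevalC, ev_lin_form, mevalM).
move: (lin_coord q i0) (lin_coord q i1) (lin_coord q i2) (N i i0) (N i i1) (N i i2).
by move=> a b c d e f; ring.
Qed.

Lemma ev_mderiv2_cusp_cubic (q : 'rV[K]_3) i j :
  ev (cusp_cubic^`M(i))^`M(j) q = 24 * lin_coord q i1 * N i i1 * N j i1
    + 54 * lin_coord q i2 * (N i i0 * N j i2 + N i i2 * N j i0)
    + 54 * lin_coord q i0 * N i i2 * N j i2.
Proof.
rewrite /ev /cusp_cubic !(mderivD, mderivZ, mderivM, mderiv_lin_form, mderivC).
rewrite !(mevalD, mevalZ, mevalC, meval0, ev_lin_form, mevalM).
move: (lin_coord q i0) (lin_coord q i1) (lin_coord q i2) (N i i0) (N i i1) (N i i2)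
  (N j i0) (N j i1) (N j i2).
by move=> a b c d e f g h k; ring.
Qed.

Lemma dot_grad_cusp_cubic (q v : 'rV[K]_3) :
  dot3 (grad cusp_cubic q) v = 12 * lin_coord q i1 ^+ 2 * lin_coord v i1
    + 27 * lin_coord q i2 ^+ 2 * lin_coord v i0
    + 54 * lin_coord q i0 * lin_coord q i2 * lin_coord v i2.
Proof.
rewrite /dot3 /grad mxE sum3 !mxE !ev_mderiv_cusp_cubic !(lin_coordE v).
move: (lin_coord q i0) (lin_coord q i1) (lin_coord q i2) (v 0 i0) (v 0 i1) (v 0 i2).
by move=> a b c x y z; ring.
Qed.

Lemma dot_hessian_cusp_cubic (q v : 'rV[K]_3) :
  dot3 (v *m hessian cusp_cubic q) v = 24 * lin_coord q i1 * lin_coord v i1 ^+ 2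
    + 108 * lin_coord q i2 * lin_coord v i0 * lin_coord v i2
    + 54 * lin_coord q i0 * lin_coord v i2 ^+ 2.
Proof.
rewrite /dot3 /hessian mxE sum3 !mxE !sum3 !mxE !ev_mderiv2_cusp_cubic !(lin_coordE v).
move: (lin_coord q i0) (lin_coord q i1) (lin_coord q i2) (v 0 i0) (v 0 i1) (v 0 i2).
by move=> a b c x y z; ring.
Qed.

Lemma cusp_cubic_homog : cusp_cubic \is 3.-homog.
Proof.
have hl j : lin_form j \is 1.-homog.
  by apply: rpred_sum => k _; apply: rpredZ; rewrite dhomogX /= mdeg1.
rewrite /cusp_cubic; apply: rpredD; apply: rpredZ.
  by rewrite -[3%N]/(1 + 1 + 1)%N; apply: dhomogM; first apply: dhomogM.
by rewrite -[3%N]/(1 + (1 + 1))%N; apply: dhomogM => //; apply: dhomogM.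
Qed.

Lemma grad_cusp_cubic_eq0 (q : 'rV[K]_3) :
  grad cusp_cubic q = 0 <-> forall i, ev cusp_cubic^`M(i) q = 0.
Proof.
split=> [h i|h]; last by apply/matrixP => i j; rewrite !mxE h.
by have := congr1 (fun M : 'rV[K]_3 => M 0 i) h; rewrite !mxE.
Qed.

Lemma unitmx_col_neq0 j : ~ (forall i, N i j = 0).
Proof.
move=> h; have := congr1 (fun M : 'M[K]_3 => M j j) (mulVmx N_unit).
by rewrite !mxE eqxx sum3 !h !mulr0 !addr0 => /eqP; rewrite eq_sym oner_eq0.
Qed.

Hypothesis hK : [pchar K] =i pred0.

Lemma tangent_cusp_cubic_flex (q : 'rV[K]_3) :
  dot3 (grad cusp_cubic cusp_cubic_flex) q = 27 * lin_coord q i0.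
Proof. by rewrite dot_grad_cusp_cubic !lin_coord_invmx !mxE /=; ring. Qed.

Lemma flex_cusp_cubic : flex cusp_cubic cusp_cubic_flex.
Proof.
have c2 : lin_coord cusp_cubic_flex i2 = 1 by rewrite lin_coord_invmx mxE.
have n27 : (27 : K) != 0 by apply: pchar0_natr_neq0.
split.
  apply/eqP => p0; move: c2; rewrite p0 /lin_coord mul0mx mxE => /eqP.
  by rewrite eq_sym oner_eq0.
split; first by rewrite ev_cusp_cubic !lin_coord_invmx !mxE /cubic_disc /=; ring.
split.
  apply/eqP => /grad_cusp_cubic_eq0 h; apply: (unitmx_col_neq0 (j := i0)) => i.
  move/eqP: (h i); rewrite ev_mderiv_cusp_cubic !lin_coord_invmx !mxE /=.
  by rewrite (_ : _ + _ = 27 * N i i0); [rewrite mulf_eq0 (negbTE n27) => /eqP | ring].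
move=> v; rewrite tangent_cusp_cubic_flex => /eqP.
rewrite mulf_eq0 (negbTE n27) /= => /eqP v0.
by rewrite dot_hessian_cusp_cubic !lin_coord_invmx !mxE v0 /=; ring.
Qed.

(** The flexes are found by testing the Hessian form on the tangent line in the
    directions [(-12 y^2, 27 z^2, 0)] and [(-2 x, 0, z)]. *)
Lemma flex_cusp_cubic_uniq (p : 'rV[K]_3) :
  flex cusp_cubic p -> exists c : K, p = c *: cusp_cubic_flex.
Proof.
move=> [pn0 [hF [hg hfl]]]; move: hF hg hfl; rewrite ev_cusp_cubic /cubic_disc.
set x := lin_coord p i0; set y := lin_coord p i1; set z := lin_coord p i2.
move=> hF hg hfl.
have n4 : (4 : K) != 0 by apply: pchar0_natr_neq0.
have n24 : (24 : K) != 0 by apply: pchar0_natr_neq0.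
have n162 : (162 : K) != 0 by apply: pchar0_natr_neq0.
have n27 : (27 : K) != 0 by apply: pchar0_natr_neq0.
have zn0 : z != 0.
  apply: contra hg => /eqP z0; apply/eqP/grad_cusp_cubic_eq0 => i.
  have y0 : y = 0.
    move: hF; rewrite z0 => /eqP; rewrite (_ : _ + _ = 4 * y ^+ 3); last by ring.
    by rewrite mulf_eq0 (negbTE n4) expf_eq0 /= => /eqP.
  by rewrite ev_mderiv_cusp_cubic -/x -/y -/z y0 z0; ring.
have y0 : y = 0.
  have := hfl (row3 (- (12 * y ^+ 2) / (27 * z ^+ 2)) 1 0 *m invmx N).
  rewrite dot_grad_cusp_cubic dot_hessian_cusp_cubic !lin_coord_invmx !mxE /= -/x -/y -/z.
  move=> h; have : 24 * y = 0 by rewrite -[RHS]h; field; rewrite ?n27 ?zn0.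
  by move/eqP; rewrite mulf_eq0 (negbTE n24) => /eqP.
have x0 : x = 0.
  have := hfl (row3 (- (2 * x) / z) 0 1 *m invmx N).
  rewrite dot_grad_cusp_cubic dot_hessian_cusp_cubic !lin_coord_invmx !mxE /= -/x -/y -/z y0.
  move=> h; have : - (162 * x) = 0 by rewrite -[RHS]h; field; rewrite ?zn0.
  by move/eqP; rewrite oppr_eq0 mulf_eq0 (negbTE n162) => /eqP.
exists z; rewrite [LHS]lin_coord_eta -/x -/y -/z x0 y0 /cusp_cubic_flex scalemxAl.
congr (_ *m _); apply/matrixP => i j; rewrite ord1.
by case: (ord3P j) => [->|[->|->]]; rewrite !mxE /= ?mulr0 ?mulr1.
Qed.

Lemma cusp_cusp_cubic : cusp cusp_cubic cusp_cubic_cusp.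
Proof.
have c0 : lin_coord cusp_cubic_cusp i0 = 1 by rewrite lin_coord_invmx mxE.
have n54 : (54 : K) != 0 by apply: pchar0_natr_neq0.
split.
  split.
    apply/eqP => p0; move: c0; rewrite p0 /lin_coord mul0mx mxE => /eqP.
    by rewrite eq_sym oner_eq0.
  split; first by rewrite ev_cusp_cubic !lin_coord_invmx !mxE /cubic_disc /=; ring.
  apply/grad_cusp_cubic_eq0 => i.
  by rewrite ev_mderiv_cusp_cubic !lin_coord_invmx !mxE /=; ring.
(* The Hessian at the cusp is the rank-one form [54 z^2]. *)
have -> : hessian cusp_cubic cusp_cubic_cusp = col i2 N *m (54 *: (col i2 N)^T).
  apply/matrixP => i j; rewrite !mxE big_ord1 !mxE ev_mderiv2_cusp_cubic.
  by rewrite !lin_coord_invmx !mxE /=; ring.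
apply/eqP; rewrite eqn_leq; apply/andP; split.
  exact: leq_trans (mxrankM_maxl _ _) (rank_leq_col _).
rewrite lt0n mxrank_eq0; apply/eqP => h0.
apply: (unitmx_col_neq0 (j := i2)) => k.
have := congr1 (fun M : 'M[K]_3 => M k k) h0; rewrite !mxE big_ord1 !mxE => /eqP.
by rewrite mulrCA mulf_eq0 (negbTE n54) /= mulf_eq0 orbb => /eqP.
Qed.

Lemma cusp_cubic_no_linear_factor (G H : {mpoly K[3]}) :
  cusp_cubic = G * H -> msize G != 2%N.
Proof.
move=> FGH; apply/eqP => hs.
pose gc : 'cV[K]_3 := \col_i G@_U_(i).
pose hc := invmx N *m gc.
have evG w : ev G (w *m invmx N) = G@_0%MM + (w *m hc) 0 0.
  rewrite /ev {1}(msize_le2_affine (eq_leq hs)) mevalD mevalC raddf_sum /=.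
  rewrite mulmxA mxE; congr (_ + _); apply: eq_bigr => i _.
  by rewrite mevalZ mevalXU [gc i 0]mxE mulrC.
have hcn0 : ~~ [&& hc i0 0 == 0, hc i1 0 == 0 & hc i2 0 == 0].
  apply/negP => /and3P [/eqP h0 /eqP h1 /eqP h2].
  have gc0 : gc = 0.
    rewrite -[gc](mulKVmx N_unit) -/hc (_ : hc = 0) ?mulmx0 //.
    by apply/matrixP => i j; rewrite ord1 [RHS]mxE; case: (ord3P i) => [->|[->|->]].
  have := hs; rewrite {1}(msize_le2_affine (eq_leq hs)) big1 ?addr0 ?msizeC.
    by case: (_ == 0).
  move=> i _; have := congr1 (fun M : 'cV[K]_3 => M i 0) gc0.
  by rewrite !mxE => ->; rewrite scale0r.
have [a [b [d [Gabd hD]]]] := hyperplane_off_cusp_curve hK (G@_0%MM) hcn0.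
move/eqP: hD; apply; clearbody hc.
rewrite -[cubic_disc a b d](_ : ev cusp_cubic (row3 a b d *m invmx N) = _); last first.
  by rewrite ev_cusp_cubic !lin_coord_invmx !mxE.
by rewrite /ev FGH mevalM -/(ev G _) evG mxE sum3 !mxE /= !addrA Gabd mul0r.
Qed.

Lemma cuspidal_cusp_cubic : cuspidal_cubic cusp_cubic.
Proof.
have Fn0 : cusp_cubic != 0.
  apply/eqP => F0; have n4 : (4 : K) != 0 by apply: pchar0_natr_neq0.
  move: n4; have : ev cusp_cubic (row3 0 1 0 *m invmx N) = 4.
    by rewrite ev_cusp_cubic !lin_coord_invmx !mxE /cubic_disc /=; ring.
  by rewrite F0 /ev meval0 => <-; rewrite eqxx.
have hsz : msize cusp_cubic = 4%N.
  have := dhomog_uniq Fn0 (dhomog_msize cusp_cubic_homog) cusp_cubic_homog.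
  have : msize cusp_cubic != 0%N by rewrite msize_poly_eq0.
  by case: (msize cusp_cubic) => [|k] //= _ ->.
split; first exact: cusp_cubic_homog.
split; last by exists cusp_cubic_cusp; apply: cusp_cusp_cubic.
split=> [|G H FGH]; first by rewrite hsz.
have Gn0 : G != 0 by apply: contra Fn0 => /eqP G0; rewrite FGH G0 mul0r.
have Hn0 : H != 0 by apply: contra Fn0 => /eqP H0; rewrite FGH H0 mulr0.
have := msizeM Gn0 Hn0; rewrite -FGH hsz.
have := cusp_cubic_no_linear_factor FGH.
have := cusp_cubic_no_linear_factor (etrans FGH (mulrC G H)).
move: (msize G) (msize H) => a b; lia.
Qed.

End CuspidalCubic.

Lemma branch_pointE (K : fieldType) (S : 'rV[K]_5 -> Prop) (P : 'M[K]_(5,3))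
    (q : 'rV[K]_3) :
  branch_point S P q <-> q != 0 /\ ~ three_distinct (fun x => S x /\ x *m P = q).
Proof.
rewrite /branch_point /three_distinct; split=> -[qn0 nE]; split=> // -[x1 [x2 [x3 h]]].
  by apply: nE; exists x1, x2, x3; case: h => -[[? ?] [? ?] [? ?]] ?.
by apply: nE; exists x1, x2, x3; case: h => -[? ? ?] [[? ? ?] ?].
Qed.

Lemma three_distinct_fibre_std (K : fieldType) (S : 'rV[K]_5 -> Prop)
    (A : 'M[K]_5) (P : 'M[K]_(5,3)) (q : 'rV[K]_3) :
  A \in unitmx -> (forall x, S x <-> std_scroll (x *m A)) ->
  (kermx (invmx A *m P) == std_line K)%MS ->
  three_distinct (fun x => S x /\ x *m P = q) <->
  three_distinct (std_fibre (q *m invmx (std_section K *m (invmx A *m P)))).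
Proof.
move=> Au hA kerR.
apply: (three_distinct_bij (mulmxK Au) (mulmxKV Au)) => x.
rewrite /std_fibre -hA; apply: and_iff_compat_l.
rewrite -{1}[x](mulmxK Au) -[_ *m invmx A *m P]mulmxA (std_proj_factor _ kerR).
have Bu := std_section_mul_unit kerR.
by split=> [<-|->]; rewrite ?(mulmxK Bu) ?(mulmxKV Bu).
Qed.

Unset Implicit Arguments.

Theorem proposition5p2 (K : closedFieldType) (hK : [pchar K] =i pred0)
    (S : 'rV[K]_5 -> Prop) (hS : smooth_cubic_scroll S) :
  exists L : 'M[K]_(2,5), is_line L /\ line_disjoint L S /\
    forall P : 'M[K]_(5,3), projection_from L P ->
      exists (F : {mpoly K[3]}) (p : 'rV[K]_3),
        [/\ cuspidal_cubic F, flex F p,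
            (forall p', flex F p' -> exists c : K, p' = c *: p) &
            (forall q : 'rV[K]_3, q != 0 ->
               (branch_point S P q <-> ev F q = 0 \/ dot3 (grad F p) q = 0))].
Proof.
case: hS => A [Au hA].
exists (std_line K *m invmx A); split.
  by rewrite /is_line mxrankMfree ?rank_std_line // row_free_unit unitmx_inv.
split.
  by move=> x _ /submxP [D ->] /hA; rewrite -mulmxA mulmxKV //; apply: std_scroll_std_line.
move=> P /(kermx_conj Au) kerR.
pose N := invmx (std_section K *m (invmx A *m P)).
have Nu : N \in unitmx by rewrite unitmx_inv std_section_mul_unit.
exists (cusp_cubic N), (cusp_cubic_flex N); split.
- exact: cuspidal_cusp_cubic.
- exact: flex_cusp_cubic.
- exact: flex_cusp_cubic_uniq.
move=> q qn0; rewrite branch_pointE (three_distinct_fibre_std q Au hA kerR) -/N.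
rewrite [q *m N]row3_eta std_fibre_three_points // ev_cusp_cubic tangent_cusp_cubic_flex //.
have n27 : (27 : K) != 0 by apply: pchar0_natr_neq0.
rewrite /lin_coord; set x := (q *m N) 0 i0; set D := cubic_disc _ _ _.
split=> [[_ h]|h]; last first.
  split=> // -[xn0 Dn0]; case: h => /eqP; first exact/negP.
  by rewrite mulf_eq0 (negbTE n27); apply/negP.
have [x0|xn0] := eqVneq x 0; first by right; rewrite x0 mulr0.
by left; apply/eqP; apply: contraT => Dn0; exfalso; apply: h.
Qed.
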